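(* Let $G=(\mathscr{V},\mathscr{E},m_0,\theta)$ be a weighted graph (locally finite, connected, without loops), and let $m:\mathscr{V}\to(0,\infty)$ be arbitrary. Define, for $x\in\mathscr{V}$, \[ W_m(x):=\frac{1}{m_0^2(x)}\sum_{y\in\mathscr{V}}\mathscr{E}(x,y)\,\frac{m(y)}{m(x)}\,\frac{m_0(x)}{m_0(y)},\qquad V_m(x):=d_G(x)-W_m(x). \] Then \[ \langle f, V_m(Q)f\rangle\le \langle f,\Delta_{\mathscr{E},\theta}f\rangle\quad\text{for all } f\in\mathcal{C}_c(\mathscr{V}). \] Moreover, if $G$ is bi-partite, then \[ \langle f,\Delta_{\mathscr{E},\theta}f\rangle\le\langle f,(d_G(Q)+W_m(Q))f\rangle\quad\text{for all } f\in\mathcal{C}_c(\mathscr{V}). \]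
   Context: A weighted graph $G=(\mathscr{V},\mathscr{E},m_0,\theta)$ consists of a countable set $\mathscr{V}$, a symmetric map $\mathscr{E}:\mathscr{V}\times\mathscr{V}\to[0,\infty)$, a vertex weight $m_0:\mathscr{V}\to(0,\infty)$ and a phase $\theta:\mathscr{V}\times\mathscr{V}\to[-\pi,\pi]$ with $\theta(x,y)=-\theta(y,x)$. Vertices $x,y$ are neighbors ($x\sim y$) if $\mathscr{E}(x,y)\neq0$. Locally finite: every vertex has finitely many neighbors; connected: any two vertices are joined by a finite sequence of successive neighbors; no loops: $\mathscr{E}(x,x)=0$. The Hilbert space is $\ell^2(\mathscr{V},m_0^2)$ with $\langle f,g\rangle=\sum_x m_0^2(x)\overline{f(x)}g(x)$; $\mathcal{C}_c(\mathscr{V})$ denotes finitely supported functions. $\Delta_{\mathscr{E},\theta}$ is the Friedrichs extension of the form $\frac12\sum_{x,y}\mathscr{E}(x,y)|f(x)-e^{i\theta(x,y)}f(y)|^2$ on $\mathcal{C}_c(\mathscr{V})$; on $\mathcal{C}_c(\mathscr{V})$ it acts by $(\Delta_{\mathscr{E},\theta}f)(x)=m_0^{-2}(x)\sum_y\mathscr{E}(x,y)(f(x)-e^{i\theta(x,y)}f(y))$. The weighted degree is $d_G(x)=m_0^{-2}(x)\sum_y\mathscr{E}(x,y)$. For a function $W$ on $\mathscr{V}$, $W(Q)$ is multiplication by $W$. A graph is bi-partite if $\mathscr{V}$ can be partitioned into two subsets such that no two vertices in the same subset are neighbors. *)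

From HB Require Import structures.
From mathcomp Require Import all_boot all_order all_algebra.
From mathcomp Require Import all_classical all_reals.
From mathcomp Require Import trigo.
From mathcomp Require Import complex.

Set Implicit Arguments.
Unset Strict Implicit.
Unset Printing Implicit Defensive.
Import Order.TTheory GRing.Theory Num.Theory.
Local Open Scope classical_set_scope.
Local Open Scope ring_scope.
Local Open Scope complex_scope.

Record weighted_graph (R : realType) (V : countType) := WeightedGraph {
  wE : V -> V -> R;
  wm0 : V -> R;
  wtheta : V -> V -> R;
  wE_sym : forall x y, wE x y = wE y x;
  wE_ge0 : forall x y, 0 <= wE x y;
  wm0_gt0 : forall x, 0 < wm0 x;
  wtheta_range : forall x y, - pi <= wtheta x y <= pi;
  wtheta_anti : forall x y, wtheta x y = - wtheta y x
}.

Section Graph.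
Variables (R : realType) (V : countType) (G : weighted_graph R V).

Definition neighbors (x y : V) : bool := wE G x y != 0.

Definition locally_finite : Prop :=
  forall x : V, finite_set [set y | neighbors x y].

Definition connected_graph : Prop :=
  forall x y : V, exists s : seq V, path neighbors x s /\ last x s = y.

Definition no_loops : Prop := forall x : V, wE G x x = 0.

Definition bipartite : Prop :=
  exists A : set V, forall x y : V, neighbors x y -> (A x <-> ~ A y).

Definition finsupp (f : V -> R[i]) : Prop := finite_set [set x | f x != 0].

Definition expi (t : R) : R[i] := (cos t) +i* (sin t).

Definition inner (f g : V -> R[i]) : R[i] :=
  \sum_(x \in [set: V]) ((wm0 G x ^+ 2)%:C * (f x)^* * g x).

Definition laplacian (f : V -> R[i]) (x : V) : R[i] :=
  ((wm0 G x ^+ 2)^-1)%:C *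
  \sum_(y \in [set: V]) ((wE G x y)%:C * (f x - expi (wtheta G x y) * f y)).

Definition degree (x : V) : R :=
  (wm0 G x ^+ 2)^-1 * \sum_(y \in [set: V]) wE G x y.

Definition mult_op (W : V -> R) (f : V -> R[i]) (x : V) : R[i] := (W x)%:C * f x.

Definition W_m (m : V -> R) (x : V) : R :=
  (wm0 G x ^+ 2)^-1 *
  \sum_(y \in [set: V]) (wE G x y * (m y / m x) * (wm0 G x / wm0 G y)).

Definition V_m (m : V -> R) (x : V) : R := degree x - W_m m x.

End Graph.

(** With k(x,y) := (m y / m x) (m0 x / m0 y) one has k(x,y) k(y,x) = 1 and
    W_m(x) = m0(x)^-2 sum_y E(x,y) k(x,y).  Writing <f, Δ f> = <f, d f> - H(f)
    with the real hopping term H(f) = sum_{x,y} E(x,y) conj(f x) e^{iθ(x,y)} f y,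
    both inequalities amount to -<f, W_m f> <= H(f) <= <f, W_m f>.
    Symmetrising the double sums over each edge {x,y} reduces this to the
    pointwise bound 2 Re (conj(u) z v) <= k |u|^2 + k^-1 |v|^2 for |z| = 1,
    which is |k u - z v|^2 >= 0 divided by k.  Local finiteness makes every
    sum finite: all of them run over the vertices at distance at most one
    from the support of f. *)
From HB Require Import structures.
From mathcomp Require Import all_boot all_order all_algebra.
From mathcomp Require Import all_classical all_reals.
From mathcomp Require Import trigo complex finmap ring.
(* Imported after finmap, whose [finsupp] would otherwise shadow the one of Defs. *)
From Pilot Require Import Defs.
Set Implicit Arguments.
Unset Strict Implicit.
Unset Printing Implicit Defensive.
Import Order.TTheory GRing.Theory Num.Theory.
Local Open Scope classical_set_scope.
Local Open Scope complex_scope.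
Local Open Scope ring_scope.

Lemma cross_term_le (C : numClosedFieldType) (p q z u v : C) :
  0 < p -> p * q = 1 -> z^* * z = 1 ->
  u^* * z * v + v^* * z^* * u <= p * (u^* * u) + q * (v^* * v).
Proof.
move=> p_gt0 pq1 zJz; rewrite -subr_ge0.
have q_gt0 : 0 < q by rewrite -(pmulr_rgt0 _ p_gt0) pq1 ltr01.
have wJ : (p * u - z * v)^* = p * u^* - z^* * v^*.
  by rewrite rmorphB !rmorphM /= (geC0_conj (ltW p_gt0)).
have -> : p * (u^* * u) + q * (v^* * v) - (u^* * z * v + v^* * z^* * u)
    = q * ((p * u - z * v) * (p * u^* - z^* * v^*))
      + (1 - p * q) * (p * (u^* * u) - (u^* * z * v + v^* * z^* * u))
      + q * (1 - z^* * z) * (v^* * v) by ring.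
rewrite -wJ pq1 zJz subrr !(mul0r, mulr0, addr0).
by rewrite mulr_ge0 ?mul_conjC_ge0 ?ltW.
Qed.

Lemma sumr_sym_ge0 (U : numDomainType) (I : Type) (s : seq I) (F : I -> I -> U) :
  (forall x y, 0 <= F x y + F y x) ->
  0 <= \sum_(x <- s) \sum_(y <- s) F x y.
Proof.
move=> FF_ge0; rewrite -(pmulrn_lge0 _ (isT : (0 < 2)%N)) mulr2n.
rewrite {2}exchange_big -big_split /=.
apply: sumr_ge0 => x _; rewrite -big_split.
by apply: sumr_ge0 => y _; exact: FF_ge0.
Qed.

Lemma conj_expi (R : realType) (t : R) : (expi t)^* = expi (- t).
Proof. by rewrite /expi cosN sinN. Qed.

Lemma mul_conj_expi (R : realType) (t : R) : (expi t)^* * expi t = 1.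
Proof.
rewrite conj_expi /expi cosN sinN; apply/eqP; rewrite eq_complex /=.
by rewrite !mulNr opprK -!expr2 cos2Dsin2 [cos t * _]mulrC subrr !eqxx.
Qed.

Section FiniteSupportForms.
Variables (R : realType) (V : countType) (G : weighted_graph R V).
Variables (f : V -> R[i]) (T : {fset V}).
Hypothesis supp_T : forall x, f x != 0 -> x \in T.
Hypothesis nbr_T : forall x y, f x != 0 -> neighbors G x y -> y \in T.

Lemma inner_fset g :
  inner G f g = \sum_(x <- T) (wm0 G x ^+ 2)%:C * (f x)^* * g x.
Proof.
rewrite /inner (fsbigTE T) // => x xT.
have -> : f x = 0 by apply/eqP; apply: contraNT xT; exact: supp_T.
by rewrite conjC0 mulr0 mul0r.
Qed.

Lemma sum_nbrs_fset (U : zmodType) x (F : V -> U) :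
  f x != 0 -> (forall y, wE G x y = 0 -> F y = 0) ->
  \sum_(y \in [set: V]) F y = \sum_(y <- T) F y.
Proof.
move=> fx F0; apply: fsbigTE => y yT; apply: F0.
by apply/eqP; apply: contraNT yT; exact: nbr_T.
Qed.

Lemma inner_edge_sum g (F : V -> V -> R[i]) :
  (forall x, f x != 0 -> g x = ((wm0 G x ^+ 2)^-1)%:C * \sum_(y <- T) F x y) ->
  inner G f g = \sum_(x <- T) \sum_(y <- T) (f x)^* * F x y.
Proof.
move=> gE; rewrite inner_fset; apply: eq_bigr => x _.
have [->|fx] := eqVneq (f x) 0.
  by rewrite conjC0 mulr0 mul0r big1 // => y _; rewrite mul0r.
have m0K : (wm0 G x ^+ 2)%:C * ((wm0 G x ^+ 2)^-1)%:C = 1 :> R[i].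
  by rewrite -rmorphM mulfV ?rmorph1 // expf_neq0 // gt_eqF ?wm0_gt0.
by rewrite gE // mulrACA m0K mul1r mulr_sumr.
Qed.

Lemma inner_mult_op_edge_sum (c : V -> V -> R) :
  (forall x y, wE G x y = 0 -> c x y = 0) ->
  inner G f (mult_op (fun x => (wm0 G x ^+ 2)^-1 * \sum_(y \in [set: V]) c x y) f)
  = \sum_(x <- T) \sum_(y <- T) (c x y)%:C * ((f x)^* * f x).
Proof.
move=> c0; rewrite (inner_edge_sum (F := fun x y => (c x y)%:C * f x)).
  by apply: eq_bigr => x _; apply: eq_bigr => y _; rewrite mulrCA.
move=> x fx; rewrite /mult_op (sum_nbrs_fset fx (F := c x)) //; last exact: c0.
by rewrite rmorphM rmorph_sum -mulrA mulr_suml.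
Qed.

Lemma inner_degree :
  inner G f (mult_op (degree G) f)
  = \sum_(x <- T) \sum_(y <- T) (wE G x y)%:C * ((f x)^* * f x).
Proof. exact: inner_mult_op_edge_sum. Qed.

Definition hopping_form : R[i] :=
  \sum_(x <- T) \sum_(y <- T) (f x)^* * ((wE G x y)%:C * (expi (wtheta G x y) * f y)).

Lemma inner_laplacian :
  inner G f (laplacian G f) = inner G f (mult_op (degree G) f) - hopping_form.
Proof.
rewrite (inner_edge_sum
  (F := fun x y => (wE G x y)%:C * (f x - expi (wtheta G x y) * f y))); last first.
  move=> x fx; rewrite /laplacian (sum_nbrs_fset fx) // => y ->.
  by rewrite mul0r.
rewrite inner_degree /hopping_form -sumrB; apply: eq_bigr => x _.
by rewrite -sumrB; apply: eq_bigr => y _; ring.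
Qed.

Lemma inner_mult_opD (W1 W2 : V -> R) :
  inner G f (mult_op (fun x => W1 x + W2 x) f)
  = inner G f (mult_op W1 f) + inner G f (mult_op W2 f).
Proof.
rewrite !inner_fset -big_split /=; apply: eq_bigr => x _.
by rewrite /mult_op -mulrDr -mulrDl rmorphD.
Qed.

Lemma inner_mult_opB (W1 W2 : V -> R) :
  inner G f (mult_op (fun x => W1 x - W2 x) f)
  = inner G f (mult_op W1 f) - inner G f (mult_op W2 f).
Proof.
rewrite !inner_fset -sumrB; apply: eq_bigr => x _.
by rewrite /mult_op -mulrBr -mulrBl rmorphB.
Qed.

Variables (m : V -> R).
Hypothesis m_gt0 : forall x, 0 < m x.

Definition edge_ratio x y := (m y / m x) * (wm0 G x / wm0 G y).

Lemma edge_ratio_gt0 x y : 0 < edge_ratio x y.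
Proof. by rewrite !mulr_gt0 ?invr_gt0 ?wm0_gt0. Qed.

Lemma edge_ratioK x y : edge_ratio x y * edge_ratio y x = 1.
Proof.
have mx := gt_eqF (m_gt0 x); have my := gt_eqF (m_gt0 y).
have m0x := gt_eqF (wm0_gt0 G x); have m0y := gt_eqF (wm0_gt0 G y).
by rewrite /edge_ratio; field; rewrite mx my m0x m0y.
Qed.

Lemma inner_W_m :
  inner G f (mult_op (W_m G m) f)
  = \sum_(x <- T) \sum_(y <- T) (wE G x y * edge_ratio x y)%:C * ((f x)^* * f x).
Proof.
have -> : W_m G m = fun x =>
    (wm0 G x ^+ 2)^-1 * \sum_(y \in [set: V]) (wE G x y * edge_ratio x y).
  by apply/funext => x; rewrite /W_m; under eq_fsbigr do rewrite -mulrA.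
by apply: inner_mult_op_edge_sum => x y ->; rewrite mul0r.
Qed.

Lemma hopping_form_le (s : R) :
  s ^+ 2 = 1 -> s%:C * hopping_form <= inner G f (mult_op (W_m G m) f).
Proof.
move=> s2; rewrite inner_W_m /hopping_form -subr_ge0 mulr_sumr -sumrB.
under eq_bigr do rewrite mulr_sumr -sumrB.
apply: sumr_sym_ge0 => x y.
set e := expi (wtheta G x y).
have sJ : (s%:C)^* = s%:C := conjc_real s.
have eJ : expi (wtheta G y x) = e^* by rewrite (wtheta_anti G y x) conj_expi.
have szJ : (s%:C * e)^* * (s%:C * e) = 1.
  by rewrite rmorphM /= sJ mulrACA mul_conj_expi mulr1 -rmorphM -expr2 s2.
have kK : (edge_ratio x y)%:C * (edge_ratio y x)%:C = 1 :> R[i].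
  by rewrite -rmorphM edge_ratioK.
have k_gt0 : 0 < (edge_ratio x y)%:C by rewrite ltcR edge_ratio_gt0.
have E_ge0 : 0 <= (wE G x y)%:C by rewrite ler0c wE_ge0.
have := cross_term_le (f x) (f y) k_gt0 kK szJ.
rewrite -subr_ge0 => /(mulr_ge0 E_ge0)/le_trans; apply.
rewrite eJ [wE G y x]wE_sym !rmorphM /= sJ.
by rewrite le_eqVlt; apply: predU1l; ring.
Qed.

End FiniteSupportForms.

Lemma finsupp_nbhd_fset (R : realType) (V : countType) (G : weighted_graph R V)
    (f : V -> R[i]) :
  locally_finite G -> finsupp f ->
  exists2 T : {fset V}, (forall x, f x != 0 -> x \in T)
    & (forall x y, f x != 0 -> neighbors G x y -> y \in T).
Proof.
move=> lf fs.
pose N := \bigcup_(x in [set x | f x != 0]) ([set x] `|` [set y | neighbors G x y]).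
have finN : finite_set N.
  apply: bigcup_finite => [|x _]; first exact: fs.
  by rewrite finite_setU; split; [exact: finite_set1 | exact: lf].
exists (fset_set N) => [x fx | x y fx xy]; rewrite in_fset_set //; apply/mem_set.
  by exists x => //; left.
by exists x => //; right.
Qed.

Theorem proposition1p1 (R : realType) (V : countType) (G : weighted_graph R V)
  (m : V -> R) :
  locally_finite G -> connected_graph G -> no_loops G ->
  (forall x, 0 < m x) ->
  (forall f : V -> R[i], finsupp f ->
     inner G f (mult_op (V_m G m) f) <= inner G f (laplacian G f)) /\
  (bipartite G ->
   forall f : V -> R[i], finsupp f ->
     inner G f (laplacian G f) <=
     inner G f (mult_op (fun x => degree G x + W_m G m x) f)).
Proof.
move=> lf _ _ m_gt0.
split=> [|_] f /(finsupp_nbhd_fset lf) [T supp_T nbr_T].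
  have := hopping_form_le supp_T nbr_T m_gt0 (expr1n _ 2).
  rewrite rmorph1 mul1r (inner_mult_opB G supp_T (degree G) (W_m G m)).
  by rewrite (inner_laplacian supp_T nbr_T) lerD2l lerN2.
have sqrN1 : (-1 : R) ^+ 2 = 1 by rewrite sqrrN expr1n.
have := hopping_form_le supp_T nbr_T m_gt0 sqrN1.
rewrite rmorphN1 mulN1r (inner_mult_opD G supp_T (degree G) (W_m G m)).
by rewrite (inner_laplacian supp_T nbr_T) lerD2l.
Qed.
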